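(* Let $L$ be an ideal lattice and let $f\colon(X,\sigma)\to(X',\sigma')$ be a morphism of support data on $L$, i.e. a continuous map $f\colon X\to X'$ with $\sigma(a)=f^{-1}(\sigma'(a))$ for all compact $a\in L$. If both $(X,\sigma)$ and $(X',\sigma')$ are classifying, then $f$ is a homeomorphism.
   Context: An ideal lattice is a poset $(L,\leq)$ with an associative multiplication such that: (L1) $L$ is a complete lattice; (L2) every element is a supremum of compact elements ($a$ is compact if $a\leq\sup A$ implies $a\leq\sup A'$ for some finite $A'\subseteq A$); (L3) multiplication distributes over binary joins on both sides; (L4) $1=\sup L$ is compact and is a two-sided identity; (L5) products of compact elements are compact. Semi-prime: $bb\leq a\Rightarrow b\leq a$. A support datum on $L$ is a pair $(X,\sigma)$ with $X$ a topological space and $\sigma$ assigning to each compact $a$ a closed subset $\sigma(a)\subseteq X$ with $\sigma(a\vee b)=\sigma(a)\cup\sigma(b)$, $\sigma(1)=X$, $\sigma(ab)=\sigma(a)\cap\sigma(b)$. It is classifying if $X$ is spectral (i.e. $T_0$, quasi-compact, quasi-compact opens closed under finite intersections and forming a basis, every non-empty irreducible closed set has a generic point) and the assignments $a\mapsto\bigcup_{b\leq a,\ b\text{ compact}}\sigma(b)$ and $Y\mapsto\bigvee_{b\text{ compact},\,\sigma(b)\subseteq Y}b$ induce mutually inverse bijections between the semi-prime elements of $L$ and the subsets $Y\subseteq X$ of the form $Y=\bigcup_i Y_i$ with each $X\setminus Y_i$ quasi-compact open. *)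

From HB Require Import structures.
From mathcomp Require Import all_boot all_order.
From mathcomp Require Import boolp classical_sets functions cardinality topology.

Set Implicit Arguments.
Unset Strict Implicit.
Unset Printing Implicit Defensive.

Local Open Scope classical_set_scope.

Section IdealLattice.
Variables (L : Type) (le : L -> L -> Prop) (mul : L -> L -> L)
  (sup : set L -> L).

Definition is_lub (A : set L) (s : L) :=
  (forall a, A a -> le a s) /\ (forall u, (forall a, A a -> le a u) -> le s u).

Definition ljoin (a b : L) : L := sup [set x | x = a \/ x = b].

Definition ltop : L := sup setT.

Definition lcompact (a : L) :=
  forall A : set L, le a (sup A) ->
    exists A' : set L, [/\ finite_set A', A' `<=` A & le a (sup A')].

Record ideal_lattice : Prop := IdealLattice {
  il_refl : forall a, le a a;
  il_trans : forall a b c, le a b -> le b c -> le a c;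
  il_antisym : forall a b, le a b -> le b a -> a = b;
  il_mulA : forall a b c, mul a (mul b c) = mul (mul a b) c;
  il_sup : forall A : set L, is_lub A (sup A);
  il_algebraic : forall a, exists A : set L,
      (forall b, A b -> lcompact b) /\ a = sup A;
  il_mulDr : forall a b c, mul a (ljoin b c) = ljoin (mul a b) (mul a c);
  il_mulDl : forall a b c, mul (ljoin a b) c = ljoin (mul a c) (mul b c);
  il_top_compact : lcompact ltop;
  il_mul1l : forall a, mul ltop a = a;
  il_mulr1 : forall a, mul a ltop = a;
  il_mul_compact : forall a b, lcompact a -> lcompact b -> lcompact (mul a b)
}.

Definition semiprime (a : L) := forall b, le (mul b b) a -> le b a.

(* support datum (X, sigma); sigma is only constrained on compact elements *)
Definition support_datum (X : topologicalType) (sigma : L -> set X) :=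
  [/\ forall a, lcompact a -> closed (sigma a),
      forall a b, lcompact a -> lcompact b ->
        sigma (ljoin a b) = sigma a `|` sigma b,
      sigma ltop = setT &
      forall a b, lcompact a -> lcompact b ->
        sigma (mul a b) = sigma a `&` sigma b].

Definition support_morphism (X X' : topologicalType) (sigma : L -> set X)
  (sigma' : L -> set X') (f : X -> X') :=
  continuous f /\ forall a, lcompact a -> sigma a = f @^-1` (sigma' a).

Definition thomason_subset (X : topologicalType) (Y : set X) :=
  exists F : set (set X),
    (forall Z, F Z -> open (~` Z) /\ compact (~` Z)) /\
    Y = \bigcup_(Z in F) Z.

Definition classif_phi (X : topologicalType) (sigma : L -> set X) (a : L)
  : set X :=
  \bigcup_(b in [set b | lcompact b /\ le b a]) sigma b.

Definition classif_psi (X : topologicalType) (sigma : L -> set X) (Y : set X)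
  : L := sup [set b | lcompact b /\ sigma b `<=` Y].

End IdealLattice.

Definition irreducible_set (X : topologicalType) (Z : set X) :=
  Z !=set0 /\
  forall Z1 Z2 : set X, closed Z1 -> closed Z2 -> Z `<=` Z1 `|` Z2 ->
    Z `<=` Z1 \/ Z `<=` Z2.

Definition spectral_space (X : topologicalType) :=
  [/\ @kolmogorov_space X,
      compact [set: X],
      (forall U V : set X, open U -> compact U -> open V -> compact V ->
          compact (U `&` V)),
      (forall U : set X, open U -> forall x, U x ->
          exists V : set X, [/\ open V, compact V, V x & V `<=` U]) &
      (forall Z : set X, closed Z -> irreducible_set Z ->
          exists x : X, closure [set x] = Z)].

Definition classifying (L : Type) (le : L -> L -> Prop) (mul : L -> L -> L)
  (sup : set L -> L) (X : topologicalType) (sigma : L -> set X) :=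
  [/\ spectral_space X,
      (forall a, semiprime le mul a ->
          thomason_subset (classif_phi le sup sigma a)),
      (forall Y, thomason_subset Y ->
          semiprime le mul (classif_psi le sup sigma Y)),
      (forall a, semiprime le mul a ->
          classif_psi le sup sigma (classif_phi le sup sigma a) = a) &
      (forall Y, thomason_subset Y ->
          classif_phi le sup sigma (classif_psi le sup sigma Y) = Y)].

Definition homeomorphism (X X' : topologicalType) (f : X -> X') :=
  exists g : X' -> X,
    [/\ cancel f g, cancel g f, continuous f & continuous g].

From mathcomp Require Import all_boot boolp classical_sets topology.

Set Implicit Arguments.
Unset Strict Implicit.
Unset Printing Implicit Defensive.

Local Open Scope classical_set_scope.

(** Both spaces are spectral, so their topologies are determined by the
    lattices of Thomason subsets: the quasi-compact opens are recovered as the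
    complements of the compact elements of these lattices (Hochster duality),
    and the points as the prime filters of quasi-compact opens (sobriety).
    Since [f] is a morphism, [f^-1] carries the classifying bijection of
    [X'] to that of [X]; hence [f^-1] is an isomorphism of Thomason lattices,
    so it matches quasi-compact opens and prime filters bijectively, which
    makes [f] bijective and open. *)

Section QuasiCompactOpens.
Variable X : topologicalType.
Implicit Types (A B D U V W Z : set X) (C F M : set (set X)).

Definition qc_open U := open U /\ compact U.
Definition qc_closed Z := qc_open (~` Z).

Definition qc_filter F := [/\ F `<=` qc_open, F setT,
  forall U V, F U -> U `<=` V -> qc_open V -> F V &
  forall U V, F U -> F V -> F (U `&` V)].

Definition qc_prime F :=
  forall U V, qc_open U -> qc_open V -> F (U `|` V) -> F U \/ F V.

Lemma qc_openU U V : qc_open U -> qc_open V -> qc_open (U `|` V).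
Proof. by move=> [oU cU] [oV cV]; split; [exact: openU | exact: compactU]. Qed.

Lemma qc_open0 : qc_open set0.
Proof. by split; [exact: open0 | exact: compact0]. Qed.

Lemma qc_closedC U : qc_open U -> qc_closed (~` U).
Proof. by rewrite /qc_closed setCK. Qed.

Lemma compact_bigcup_closed A C (Q : set X -> Prop) :
  compact A -> C `<=` open -> A `<=` \bigcup_(W in C) W ->
  Q set0 -> (forall U V, Q U -> Q V -> Q (U `|` V)) -> C `<=` Q ->
  exists2 B, Q B & A `<=` B.
Proof.
move=> cA oC AC Q0 QU CQ; apply: contrapT => noB.
pose G := [set S | exists2 B, Q B & A `\` B `<=` S].
have G_proper : ProperFilter G.
  split.
    move=> [B QB AB]; apply: noB; exists B => // x Ax.
    by apply: contrapT => nBx; exact: (AB x).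
  split; first by exists set0.
    move=> S1 S2 [B1 QB1 AB1] [B2 QB2 AB2]; exists (B1 `|` B2); first exact: QU.
    by move=> x [Ax /not_orP [nB1 nB2]]; split; [exact: AB1 | exact: AB2].
  by move=> S1 S2 S12 [B QB AB]; exists B => //; exact: subset_trans S12.
have GA : G A by exists set0 => // x [].
have [p [Ap clG]] := cA G G_proper GA.
have [W CW Wp] := AC p Ap.
have GAW : G (A `\` W) by exists W; [exact: CQ | exact: subset_refl].
have nbhsW : nbhs p W by apply: open_nbhs_nbhs; split=> //; exact: oC.
by have [x [[_ nWx] Wx]] := clG _ _ GAW nbhsW.
Qed.

Hypothesis spectralX : spectral_space X.

Lemma qc_openT : qc_open setT.
Proof. by case: spectralX => _ cT _ _ _; split=> //; exact: openT. Qed.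

Lemma qc_openI U V : qc_open U -> qc_open V -> qc_open (U `&` V).
Proof.
by case: spectralX => _ _ cI _ _ [oU cU] [oV cV]; split; [exact: openI | exact: cI].
Qed.

Lemma qc_closed0 : qc_closed set0.
Proof. by rewrite /qc_closed setC0; exact: qc_openT. Qed.

Lemma qc_closedU A B : qc_closed A -> qc_closed B -> qc_closed (A `|` B).
Proof. by rewrite /qc_closed setCU; exact: qc_openI. Qed.

Lemma qc_open_nbhs U x : open U -> U x -> exists2 V, qc_open V & V x /\ V `<=` U.
Proof.
by case: spectralX => _ _ _ base _ oU Ux; have [V [? ? ? ?]] := base U oU x Ux; exists V.
Qed.

Lemma qc_open_separated x y : (forall U, qc_open U -> U x <-> U y) -> x = y.
Proof.
case: spectralX => T0 _ _ _ _ sep; case: (eqVneq x y) => // /T0 [A].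
have sep_nbhs z t : nbhs z A -> ~ A t -> (forall U, qc_open U -> U z -> U t) -> False.
  rewrite nbhsE => -[B [oB Bz] BA] nAt sub.
  have [V qV [Vz VB]] := qc_open_nbhs oB Bz.
  exact: nAt (BA _ (VB _ (sub _ qV Vz))).
rewrite !inE => -[[Ax nAy] | [Ay nAx]]; exfalso.
  by apply: sep_nbhs Ax nAy _ => U qU /(sep U qU).
by apply: sep_nbhs Ay nAx _ => U qU /(sep U qU).
Qed.

Lemma qc_prime_filter_point P : qc_filter P -> qc_prime P -> ~ P set0 ->
  exists x, forall U, qc_open U -> U x <-> P U.
Proof.
case: (spectralX) => _ _ _ _ generic [Pqc PT Pup PI] Pprime nP0.
(* The point is the generic point of the complement of [N]. *)
pose N := \bigcup_(W in [set W | qc_open W /\ ~ P W]) W.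
have N_small W : qc_open W -> W `<=` N -> ~ P W.
  move=> [oW cW] WN PW.
  have Nopen : [set W | qc_open W /\ ~ P W] `<=` open by move=> V [[]].
  have [|||B [qB nPB] WB] :=
    compact_bigcup_closed (Q := fun B => qc_open B /\ ~ P B) cW Nopen WN.
  - by split=> //; exact: qc_open0.
  - move=> U V [qU nPU] [qV nPV]; split; first exact: qc_openU.
    by move=> /(Pprime _ _ qU qV) [].
  - by [].
  exact/nPB/(Pup _ _ PW WB qB).
pose Z := ~` N.
have P_of_Z V z : qc_open V -> V z -> Z z -> P V.
  by move=> qV Vz Zz; apply: contrapT => nPV; apply: Zz; exists V.
have closedZ : closed Z by apply: open_closedC; apply: bigcup_open => W [[]].
have irrZ : irreducible_set Z.
  split.
    apply: contrapT => noZ; apply: (N_small setT qc_openT) => // z _.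
    by apply: contrapT => nNz; apply: noZ; exists z.
  move=> Z1 Z2 cZ1 cZ2 ZZ12; apply: contrapT => /not_orP[].
  move=> /nonsubset[z1 [Zz1 nZ1z1]] /nonsubset[z2 [Zz2 nZ2z2]].
  have [V1 qV1 [V1z1 V1Z1]] := qc_open_nbhs (closed_openC cZ1) nZ1z1.
  have [V2 qV2 [V2z2 V2Z2]] := qc_open_nbhs (closed_openC cZ2) nZ2z2.
  apply: (N_small _ (qc_openI qV1 qV2)); last first.
    by apply: PI; [apply: (P_of_Z V1 z1) | apply: (P_of_Z V2 z2)].
  move=> w [V1w V2w]; apply: contrapT => /ZZ12[/(V1Z1 _ V1w) | /(V2Z2 _ V2w)] //.
have [x clx] := generic Z closedZ irrZ.
have Zx : Z x by rewrite -clx; exact: subset_closure.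
exists x => U qU; split=> [Ux | PU]; first exact: P_of_Z qU Ux Zx.
apply: contrapT => nUx; apply: (N_small U qU) => // w Uw.
apply: contrapT => Zw.
have : closure [set x] w by rewrite clx.
by move=> /(_ U (open_nbhs_nbhs (conj qU.1 Uw))) [_ [-> Ux]].
Qed.

Lemma qc_filter_maximal F0 V : qc_filter F0 -> ~ F0 V ->
  exists M, [/\ qc_filter M, F0 `<=` M, ~ M V &
    forall F, qc_filter F -> M `<` F -> F V].
Proof.
move=> F0filter nF0V.
(* [set0] is admitted so that the empty chain has an upper bound. *)
pose good F := [/\ qc_filter F, F0 `<=` F & ~ F V].
have [|M [[M0 | [Mfilter F0M nMV]] Mmax]] :=
    @Zorn_bigcup _ (fun F => F = set0 \/ good F).
- move=> Ch ChP Chtot.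
  have [[F1 ChF1 goodF1] | nogood] := pselect (exists2 F, Ch F & good F).
    2: left; apply/seteqP; split=> // W [F ChF FW].
    2: by case: (ChP F ChF) => [F0e | ?]; [rewrite F0e in FW | case: nogood; exists F].
  have good_mem F W : Ch F -> F W -> good F.
    by move=> ChF FW; case: (ChP F ChF) => // F0e; rewrite F0e in FW.
  have [[_ F1T _ _] F0F1 _] := goodF1.
  right; split; [split | by move=> W /F0F1; exists F1 |].
  + move=> W [F ChF FW].
    by have [[Fqc _ _ _] _ _] := good_mem F W ChF FW; exact: Fqc.
  + by exists F1.
  + move=> U W [F ChF FU] UW qW; exists F => //.
    by have [[_ _ Fup _] _ _] := good_mem F U ChF FU; exact: Fup FU UW qW.
  + move=> U W [Fa Cha FaU] [Fb Chb FbW].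
    have [ab | ba] := Chtot _ _ Cha Chb.
      exists Fb => //; have [[_ _ _ FbI] _ _] := good_mem Fb W Chb FbW.
      exact/FbI/FbW/ab.
    exists Fa => //; have [[_ _ _ FaI] _ _] := good_mem Fa U Cha FaU.
    exact/FaI/ba.
  + by move=> [F ChF FV]; have [_ _ nFV] := good_mem F V ChF FV.
- have [_ F0T _ _] := F0filter.
  have M_F0 : M `<` F0 by rewrite M0; split=> // F0sub; exact: F0sub _ F0T.
  by exfalso; apply: (Mmax F0 M_F0); right; split.
- exists M; split=> // F Ffilter MF; apply: contrapT => nFV.
  by apply: (Mmax F MF); right; split=> //; apply: subset_trans MF.1.
Qed.

Lemma qc_filter_maximal_prime M V : qc_open V -> qc_filter M -> ~ M V ->
  (forall F, qc_filter F -> M `<` F -> F V) -> qc_prime M.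
Proof.
move=> qV Mfilter nMV Mmax; have [Mqc MT Mup MI] := Mfilter.
have avoid W : qc_open W -> ~ M W -> exists2 m, M m & m `&` W `<=` V.
  move=> qW nMW.
  pose MW := [set Z | qc_open Z /\ exists2 m, M m & m `&` W `<=` Z].
  suff [_ mWV] : MW V by exact: mWV.
  apply: Mmax; first split.
  - by move=> Z [].
  - by split; [exact: qc_openT | exists setT => // z []].
  - move=> Z1 Z2 [_ [m Mm mZ1]] Z12 qZ2; split=> //; exists m => //.
    exact: subset_trans Z12.
  - move=> Z1 Z2 [qZ1 [m1 Mm1 mZ1]] [qZ2 [m2 Mm2 mZ2]].
    split; first exact: qc_openI.
    exists (m1 `&` m2); first exact: MI.
    by move=> z [[? ?] ?]; split; [apply: mZ1 | apply: mZ2].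
  split; first by move=> Z MZ; split; [exact: Mqc | exists Z => // z []].
  by move=> MWM; apply/nMW/MWM; split=> //; exists setT => // z [].
move=> U W qU qW MUW; apply: contrapT => /not_orP[nMU nMW].
have [mU MmU mUV] := avoid U qU nMU.
have [mW MmW mWV] := avoid W qW nMW.
apply/nMV/(Mup (mU `&` mW `&` (U `|` W))) => //; first exact/MI/MUW/MI.
by move=> z [[mUz mWz] [Uz | Wz]]; [apply: mUV | apply: mWV].
Qed.

Lemma qc_closed_directed_cover D C : qc_closed D -> C `<=` qc_closed -> C set0 ->
  (forall A B, C A -> C B -> C (A `|` B)) -> D `<=` \bigcup_(E in C) E ->
  exists2 E, C E & D `<=` E.
Proof.
move=> qD qcC C0 CU DC; apply: contrapT => noE.
(* Otherwise a maximal filter avoiding [~` D] is prime, and its point lies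
   in [D] but outside every member of [C]. *)
pose F0 := [set W | qc_open W /\ exists2 E, C E & ~` E `<=` W].
have F0filter : qc_filter F0.
  split.
  - by move=> W [].
  - by split; [exact: qc_openT | exists set0].
  - move=> U W [_ [E CE EU]] UW qW; split=> //; exists E => //.
    exact: subset_trans UW.
  - move=> U W [qU [E1 CE1 E1U]] [qW [E2 CE2 E2W]]; split; first exact: qc_openI.
    by exists (E1 `|` E2); [exact: CU | rewrite setCU; exact: setISS].
have nF0D : ~ F0 (~` D).
  by move=> [_ [E CE]]; rewrite setCS => DE; apply: noE; exists E.
have [M [Mfilter F0M nMD Mmax]] := qc_filter_maximal F0filter nF0D.
have [Mqc _ Mup _] := Mfilter.
have nM0 : ~ M set0 by move=> M0; apply/nMD/(Mup set0).
have [x Mx] := qc_prime_filter_point Mfilter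
  (qc_filter_maximal_prime qD Mfilter nMD Mmax) nM0.
have Dx : D x by apply: contrapT => nDx; apply/nMD/(Mx _ qD).1.
have [E CE Ex] := DC x Dx.
have ME : M (~` E) by apply: F0M; split; [exact: qcC | exists E].
exact: (Mx _ (qcC E CE)).2 ME Ex.
Qed.

End QuasiCompactOpens.

Section ThomasonSubsets.
Variable X : topologicalType.
Implicit Types (A B K Z : set X) (S : set (set X)).

Lemma thomasonP A : thomason_subset A <->
  forall x, A x -> exists2 Z, qc_closed Z & Z `<=` A /\ Z x.
Proof.
split=> [[F [Fqc ->]] x [Z FZ Zx] | Acover].
  by exists Z; [exact: Fqc | split=> // y Zy; exists Z].
exists [set Z | qc_closed Z /\ Z `<=` A]; split; first by move=> Z [].
apply/seteqP; split=> [x /Acover [Z qZ [ZA Zx]] | x [Z [_ ZA] Zx]].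
  by exists Z.
exact: ZA.
Qed.

Lemma thomason_qc_closed Z : qc_closed Z -> thomason_subset Z.
Proof. by move=> qZ; apply/thomasonP => x Zx; exists Z => //; split. Qed.

Lemma thomason_set0 : thomason_subset (set0 : set X).
Proof. by exists set0; split=> //; rewrite bigcup_set0. Qed.

Lemma thomason_setU A B :
  thomason_subset A -> thomason_subset B -> thomason_subset (A `|` B).
Proof.
move=> /thomasonP thA /thomasonP thB; apply/thomasonP.
move=> x [/thA | /thB] [Z qZ [ZAB Zx]]; exists Z => //; split=> // y Zy.
  by left; exact: ZAB.
by right; exact: ZAB.
Qed.

Lemma thomason_bigcup S :
  S `<=` @thomason_subset X -> thomason_subset (\bigcup_(A in S) A).
Proof.
move=> Sth; apply/thomasonP => x [A SA Ax].
have [Z qZ [ZA Zx]] := (thomasonP A).1 (Sth A SA) x Ax.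
by exists Z => //; split=> // y Zy; exists A => //; exact: ZA.
Qed.

Definition thomason_compact K := forall S, S `<=` @thomason_subset X -> S set0 ->
  (forall A B, S A -> S B -> S (A `|` B)) ->
  K `<=` \bigcup_(A in S) A -> exists2 A, S A & K `<=` A.

Hypothesis spectralX : spectral_space X.

Lemma qc_closed_thomason_compact Z : qc_closed Z -> thomason_compact Z.
Proof.
move=> qZ S Sth S0 SU ZS.
pose C := [set D | qc_closed D /\ exists2 A, S A & D `<=` A].
have [||||D [_ [A SA DA]] ZD] := @qc_closed_directed_cover _ spectralX Z C qZ.
- by move=> D [].
- by split; [exact: qc_closed0 | exists set0].
- move=> D1 D2 [qD1 [A1 SA1 DA1]] [qD2 [A2 SA2 DA2]].
  split; first exact: qc_closedU.
  by exists (A1 `|` A2); [exact: SU | exact: setUSS].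
- move=> x /ZS [A SA Ax].
  have [D qD [DA Dx]] := (thomasonP A).1 (Sth A SA) x Ax.
  by exists D => //; split=> //; exists A.
by exists A => //; exact: subset_trans DA.
Qed.

Lemma thomason_compact_qc_closed K :
  thomason_subset K -> thomason_compact K -> qc_closed K.
Proof.
move=> thK cK.
have [||||Z [qZ ZK] KZ] := cK [set Z | qc_closed Z /\ Z `<=` K].
- by move=> Z [qZ _]; exact: thomason_qc_closed.
- by split; [exact: qc_closed0 | exact: sub0set].
- move=> A B [qA AK] [qB BK]; split; first exact: qc_closedU.
  by move=> x [/AK | /BK].
- by move=> x /((thomasonP K).1 thK) [Z qZ [ZK Zx]]; exists Z.
by have -> : K = Z by apply/seteqP; split.
Qed.

End ThomasonSubsets.

Section ThomasonPreimage.
Variables (X X' : topologicalType) (f : X -> X').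
Hypotheses (spectralX : spectral_space X) (spectralX' : spectral_space X').
Hypothesis thomason_preimage :
  forall T', thomason_subset T' -> thomason_subset (f @^-1` T').
Hypothesis thomason_preimage_onto : forall T, thomason_subset T ->
  exists2 T', thomason_subset T' & f @^-1` T' = T.
Hypothesis thomason_preimage_inj : forall A B,
  thomason_subset A -> thomason_subset B -> f @^-1` A = f @^-1` B -> A = B.

Lemma preimage_thomason_subset A B : thomason_subset A -> thomason_subset B ->
  f @^-1` A `<=` f @^-1` B -> A `<=` B.
Proof.
move=> thA thB AB; rewrite -(thomason_preimage_inj (thomason_setU thA thB) thB).
  by move=> y Ay; left.
by rewrite preimage_setU; exact: setUidr.
Qed.

Lemma thomason_compact_preimage T' : thomason_subset T' ->
  thomason_compact T' -> thomason_compact (f @^-1` T').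
Proof.
move=> thT' cT' S Sth S0 SU TS.
have [||||A' [_ SA'] TA'] := cT' [set A' | thomason_subset A' /\ S (f @^-1` A')].
- by move=> A' [].
- by split; [exact: thomason_set0 | rewrite preimage_set0].
- move=> A' B' [thA' SA'] [thB' SB']; split; first exact: thomason_setU.
  by rewrite preimage_setU; exact: SU.
- apply: preimage_thomason_subset => //; first by apply: thomason_bigcup => A' [].
  rewrite preimage_bigcup => x /TS [A SA Ax].
  have [A' thA' A'A] := thomason_preimage_onto (Sth A SA).
  by exists A'; [split=> //; rewrite A'A | rewrite /= -A'A in Ax].
by exists (f @^-1` A') => // x /TA'.
Qed.

Lemma preimage_thomason_compact T' : thomason_subset T' ->
  thomason_compact (f @^-1` T') -> thomason_compact T'.
Proof.
move=> thT' cT S' Sth' S0' SU' TS'.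
have [||||_ [A' SA' <-] TA] := cT [set A | exists2 A', S' A' & f @^-1` A' = A].
- by move=> _ [A' SA' <-]; exact/thomason_preimage/Sth'.
- by exists set0 => //; rewrite preimage_set0.
- move=> _ _ [A' SA' <-] [B' SB' <-].
  by exists (A' `|` B'); [exact: SU' | rewrite preimage_setU].
- by move=> x /TS' [A' SA' A'fx]; exists (f @^-1` A') => //; exists A'.
by exists A' => //; apply: preimage_thomason_subset => //; exact: Sth'.
Qed.

Lemma preimage_qc_closed Z' : qc_closed Z' -> qc_closed (f @^-1` Z').
Proof.
move=> qZ'; have thZ' := thomason_qc_closed qZ'.
apply: (thomason_compact_qc_closed spectralX (thomason_preimage thZ')).
exact: thomason_compact_preimage thZ' (qc_closed_thomason_compact spectralX' qZ').
Qed.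

Lemma qc_closed_preimage_onto Z : qc_closed Z ->
  exists2 Z', qc_closed Z' & f @^-1` Z' = Z.
Proof.
move=> qZ; have [Z' thZ' Z'Z] := thomason_preimage_onto (thomason_qc_closed qZ).
exists Z' => //; apply: (thomason_compact_qc_closed spectralX' thZ').
apply: (preimage_thomason_compact thZ').
by rewrite Z'Z; exact: qc_closed_thomason_compact.
Qed.

Lemma preimage_qc_open W : qc_open W -> qc_open (f @^-1` W).
Proof.
move=> qW; rewrite -[f @^-1` W]setCK preimage_setC.
exact: preimage_qc_closed (qc_closedC qW).
Qed.

Lemma qc_open_preimage_onto U : qc_open U -> exists2 W, qc_open W & f @^-1` W = U.
Proof.
move=> qU; have [Z' qZ' Z'U] := qc_closed_preimage_onto (qc_closedC qU).
by exists (~` Z') => //; rewrite -preimage_setC Z'U setCK.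
Qed.

Lemma preimage_qc_open_subset V W : qc_open V -> qc_open W ->
  f @^-1` V `<=` f @^-1` W -> V `<=` W.
Proof.
move=> qV qW VW; rewrite -setCS.
apply: preimage_thomason_subset; [exact/thomason_qc_closed/qc_closedC..|].
by rewrite -!preimage_setC setCS.
Qed.

Lemma preimage_qc_open_inj V W : qc_open V -> qc_open W ->
  f @^-1` V = f @^-1` W -> V = W.
Proof.
by move=> qV qW VW; apply/seteqP; split; apply: preimage_qc_open_subset; rewrite ?VW.
Qed.

Lemma thomason_preimage_injective : injective f.
Proof.
move=> x1 x2 fx12; apply: (qc_open_separated spectralX) => U qU.
by have [W _ <-] := qc_open_preimage_onto qU; rewrite /= fx12.
Qed.

Lemma thomason_preimage_surjective y : exists x, f x = y.
Proof.
pose P U := exists2 W, qc_open W & W y /\ f @^-1` W = U.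
have Pfilter : qc_filter P.
  split.
  - by move=> _ [W qW [_ <-]]; exact: preimage_qc_open.
  - by exists setT; [exact: qc_openT | split].
  - move=> U V [W qW [Wy WU]] UV qV.
    have [W2 qW2 W2V] := qc_open_preimage_onto qV.
    exists W2 => //; split=> //; apply: preimage_qc_open_subset qW qW2 _ _ Wy.
    by rewrite WU W2V.
  - move=> _ _ [W1 qW1 [W1y <-]] [W2 qW2 [W2y <-]].
    by exists (W1 `&` W2); [exact: qc_openI | split].
have Pprime : qc_prime P.
  move=> U V qU qV [W qW [Wy WUV]].
  have [W1 qW1 W1U] := qc_open_preimage_onto qU.
  have [W2 qW2 W2V] := qc_open_preimage_onto qV.
  have W_12 : W = W1 `|` W2.
    apply: preimage_qc_open_inj => //; first exact: qc_openU.
    by rewrite preimage_setU W1U W2V.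
  by move: Wy; rewrite W_12 => -[W1y | W2y]; [left; exists W1 | right; exists W2].
have nP0 : ~ P set0.
  move=> [W qW [Wy W0]].
  suff W_0 : W = set0 by rewrite W_0 in Wy.
  by apply: (preimage_qc_open_inj qW (@qc_open0 X')); rewrite preimage_set0.
have [x Px] := qc_prime_filter_point spectralX Pfilter Pprime nP0.
exists x; apply: (qc_open_separated spectralX') => W qW; split=> [Wfx | Wy].
  have [W2 qW2 [W2y W2W]] := (Px _ (preimage_qc_open qW)).1 Wfx.
  by rewrite (preimage_qc_open_inj qW2 qW W2W) in W2y.
by apply: (Px _ (preimage_qc_open qW)).2; exists W.
Qed.

Theorem thomason_preimage_homeomorphism : continuous f -> homeomorphism f.
Proof.
move=> fcont; have [g fK] := choice thomason_preimage_surjective.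
have gK : cancel f g by move=> x; apply: thomason_preimage_injective; rewrite fK.
exists g; split=> //; apply/continuousP => A oA; rewrite openE => y Agy.
have [V qV [Vgy VA]] := qc_open_nbhs spectralX oA Agy.
have [W qW WV] := qc_open_preimage_onto qV.
apply: (@filterS _ _ _ W).
  by move=> z Wz; apply: VA; rewrite -WV /= fK.
by apply: open_nbhs_nbhs; split; [exact: qW.1 | rewrite -[y]fK; move: Vgy; rewrite -WV].
Qed.

End ThomasonPreimage.

Lemma classif_phi_preimage (L : Type) (le : L -> L -> Prop) (sup : set L -> L)
    (X X' : topologicalType) (sigma : L -> set X) (sigma' : L -> set X')
    (f : X -> X') :
  (forall a, lcompact le sup a -> sigma a = f @^-1` sigma' a) ->
  forall a, classif_phi le sup sigma a = f @^-1` classif_phi le sup sigma' a.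
Proof.
move=> sigmaE a; rewrite /classif_phi preimage_bigcup.
by apply: eq_bigcupr => b [cb _]; exact: sigmaE.
Qed.

Theorem mainTheorem10 (L : Type) (le : L -> L -> Prop) (mul : L -> L -> L)
  (sup : set L -> L) (HL : ideal_lattice le mul sup)
  (X X' : topologicalType) (sigma : L -> set X) (sigma' : L -> set X')
  (HX : support_datum le mul sup sigma) (HX' : support_datum le mul sup sigma')
  (f : X -> X') (Hf : support_morphism le sup sigma sigma' f)
  (HC : classifying le mul sup sigma) (HC' : classifying le mul sup sigma') :
  homeomorphism f.
Proof.
case: Hf => fcont /classif_phi_preimage phiE.
case: HC => spX phi_thomason psi_semiprime psiK phiK.
case: HC' => spX' phi_thomason' psi_semiprime' psiK' phiK'.
apply: thomason_preimage_homeomorphism spX spX' _ _ _ fcont.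
- move=> T' thT'; rewrite -(phiK' _ thT') -phiE.
  exact/phi_thomason/psi_semiprime'.
- move=> T thT; exists (classif_phi le sup sigma' (classif_psi le sup sigma T)).
    exact/phi_thomason'/psi_semiprime.
  by rewrite -phiE phiK.
- move=> A B thA thB AB; rewrite -(phiK' _ thA) -(phiK' _ thB).
  rewrite -(psiK _ (psi_semiprime' _ thA)) -(psiK _ (psi_semiprime' _ thB)) !phiE.
  by rewrite (phiK' _ thA) (phiK' _ thB) AB.
Qed.
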